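(* Let $0<\eta<\eta'<1/4$, $\lambda=\mathrm{e}^{-1}+\eta$, $\ell=\lfloor1/\eta'\rfloor$, and $0<\delta_0<1$. Then there exists a positive integer $n_s=n_s(\delta_0,\eta')$ such that for all $n\ge n_s$ and all $\delta\ge\delta_0$ with $\delta n$ a positive integer, and every path $\pi$ of length $\delta n$ in $\mathcal W_n$, $$\mathbb{P}\big(E^\pi_{\eta',n}\,\big|\,A(\pi)\le\lambda\big)\le 2n\,\mathrm{e}^{-\delta n\eta'/16},$$ where $E^\pi_{\eta',n}$ is the event that $\Lambda_k>\lambda+\sqrt{\eta'}$ for some integer $1\le k\le\delta n/(2\ell)$.
   Context: $\mathcal W_n$ is the complete graph on $n$ vertices whose edges carry i.i.d. exponential weights with mean $n$; $A(\pi)$ denotes the average edge weight of a path $\pi$. For a path $\pi$ of length $\delta n$ let $X_1,\dots,X_{\delta n}$ be its successive edge weights, $S_k=\sum_{i=1}^kX_i$, and $\Lambda_k=(S_{\delta n}-S_{(k-1)\ell})/(\delta n-(k-1)\ell)$. *)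

From Stdlib Require Import Reals Lra Lia.
Open Scope R_scope.

Record is_prob_space {Omega : Type} (F : (Omega -> Prop) -> Prop)
    (P : (Omega -> Prop) -> R) : Prop := {
  ps_full : F (fun _ => True);
  ps_compl : forall A, F A -> F (fun w => ~ A w);
  ps_union : forall A : nat -> Omega -> Prop,
      (forall k, F (A k)) -> F (fun w => exists k, A k w);
  ps_nonneg : forall A, F A -> 0 <= P A;
  ps_one : P (fun _ => True) = 1;
  ps_sigma_add : forall A : nat -> Omega -> Prop,
      (forall k, F (A k)) ->
      (forall i j w, i <> j -> A i w -> A j w -> False) ->
      infinite_sum (fun k => P (A k)) (P (fun w => exists k, A k w))
}.

Fixpoint prodR (k : nat) (f : nat -> R) : R :=
  match k with O => 1 | S k' => prodR k' f * f k' end.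
Fixpoint sumR (k : nat) (f : nat -> R) : R :=
  match k with O => 0 | S k' => sumR k' f + f k' end.

(* W i j (for i < j < n) is the weight of the edge {i,j} of the complete
   graph on the vertex set {0,...,n-1}. *)
Definition edge_weight {Omega : Type} (W : nat -> nat -> Omega -> R)
    (i j : nat) : Omega -> R :=
  if Nat.ltb i j then W i j else W j i.

(* W_n: the edge weights are measurable, i.i.d. exponential with mean n:
   for any finitely many distinct edges {e1 a, e2 a} (a < k) and thresholds
   t a >= 0, P(W_{e_a} <= t a for all a < k) = prod_a (1 - exp(-t a / n)). *)
Definition iid_exp_weights {Omega : Type} (n : nat)
    (F : (Omega -> Prop) -> Prop) (P : (Omega -> Prop) -> R)
    (W : nat -> nat -> Omega -> R) : Prop :=
  (forall i j t, (i < j < n)%nat -> F (fun w => W i j w <= t)) /\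
  (forall (k : nat) (e1 e2 : nat -> nat) (t : nat -> R),
     (forall a, (a < k)%nat -> (e1 a < e2 a < n)%nat /\ 0 <= t a) ->
     (forall a b, (a < k)%nat -> (b < k)%nat ->
        e1 a = e1 b -> e2 a = e2 b -> a = b) ->
     P (fun w => forall a, (a < k)%nat -> W (e1 a) (e2 a) w <= t a)
     = prodR k (fun a => 1 - exp (- t a / INR n))).

(* v 0, v 1, ..., v m is a path of length m (m edges) in K_n:
   distinct vertices of {0,...,n-1}. *)
Definition is_path (n m : nat) (v : nat -> nat) : Prop :=
  (forall i, (i <= m)%nat -> (v i < n)%nat) /\
  (forall i j, (i <= m)%nat -> (j <= m)%nat -> v i = v j -> i = j).

(* S_k = X_1 + ... + X_k where X_i = weight of the i-th edge {v(i-1), v i} *)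
Definition path_S {Omega : Type} (W : nat -> nat -> Omega -> R)
    (v : nat -> nat) (k : nat) (w : Omega) : R :=
  sumR k (fun i => edge_weight W (v i) (v (S i)) w).

Definition path_A {Omega : Type} (W : nat -> nat -> Omega -> R)
    (v : nat -> nat) (m : nat) (w : Omega) : R :=
  path_S W v m w / INR m.

Definition Lambda {Omega : Type} (W : nat -> nat -> Omega -> R)
    (v : nat -> nat) (m l k : nat) (w : Omega) : R :=
  (path_S W v m w - path_S W v ((k - 1) * l) w) / (INR m - INR ((k - 1) * l)).

(* E^pi_{eta',n}: Lambda_k > lambda + sqrt eta' for some integer
   1 <= k <= m / (2 l)  (here m = delta n) *)
Definition event_E {Omega : Type} (W : nat -> nat -> Omega -> R)
    (v : nat -> nat) (m l : nat) (lam eta' : R) (w : Omega) : Prop :=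
  exists k : nat, (1 <= k)%nat /\ INR k <= INR m / (2 * INR l) /\
    Lambda W v m l k w > lam + sqrt eta'.

(* Write [X_i] for the weights along the path, [M = delta n], [r = sqrt eta' / lam], and
   [h = (k - 1) l <= M / 2].  The denominator is at least the Erlang-type bound
   [exp (- lam M / n) (lam M / n) ^ M / M!] (up to a factor [(1 - 1/(2M)) ^ M]).  On the event
   [A(pi) <= lam, Lambda_k > lam + sqrt eta'], the tilted sum [sum_i gamma_i X_i], with
   [gamma_i = 1/lam - 1/n] for [i < h] and [1/(lam + sqrt eta') - 1/n] for [i >= h], is at most
   [(1 - lam/n) M - r (M - h)]; its exponential Chernoff bound exceeds the Erlang bound only by
   [e M ((1 + r) exp (- r)) ^ (M - h) <= 4 e M exp (- r^2 M / 16)].  A union bound over the at most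
   [M + 1] values of [k] gives the claim for [M] large.  Since the probability space comes without
   an integral, the Chernoff and Erlang estimates are proved by discretising one exponential
   variable at a time into cells of small width. *)

From Stdlib Require Import Reals Factorial Lra Lia Classical FunctionalExtensionality PropExtensionality.
Open Scope R_scope.

Lemma inv_succ_lt (e : R) : 0 < e -> exists k : nat, / (INR k + 1) < e.
Proof.
  intro He. destruct (archimed_cor1 e He) as [N [HN HN0]].
  exists (pred N). rewrite <- S_INR, Nat.succ_pred_pos by lia. auto.
Qed.

Lemma nat_cell (d y : R) : 0 < d -> 0 < y -> exists l : nat, INR l * d < y <= INR (S l) * d.
Proof.
  intros Hd Hy. destruct (INR_archimed d y Hd) as [N HN].
  assert (Hle : y <= INR N * d) by lra. clear HN. induction N as [|N IH].
  - simpl in Hle; lra.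
  - destruct (Rle_lt_dec y (INR N * d)); [auto|exists N; lra].
Qed.

Lemma cell_count (eps x : R) : 0 < eps <= x ->
  exists (L : nat) (d : R), (1 <= L)%nat /\ 0 < d <= eps /\ INR L * d = x.
Proof.
  intro H. destruct (nat_cell eps x ltac:(lra) ltac:(lra)) as [l [Hl1 Hl2]].
  pose proof (pos_INR l). rewrite S_INR in Hl2.
  exists (S l), (x / INR (S l)). rewrite S_INR. split; [lia|split; [split|field; lra]].
  - apply Rdiv_lt_0_compat; lra.
  - apply (Rmult_le_reg_r (INR l + 1)); [lra|]. field_simplify; lra.
Qed.

Lemma dense_ratio (x y : R) : x < y ->
  exists a b d : nat, x < (INR a - INR b) / (INR d + 1) < y.
Proof.
  intro Hxy. destruct (inv_succ_lt ((y - x) / 2)) as [d Hd]; [lra|].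
  set (e := / (INR d + 1)) in *.
  assert (He : 0 < e) by (apply Rinv_0_lt_compat; pose proof (pos_INR d); lra).
  destruct (INR_archimed e (- x) He) as [b Hb].
  destruct (nat_cell e (x + INR b * e) He ltac:(lra)) as [l [Hl1 Hl2]].
  exists (S (S l)), b, d. unfold Rdiv; fold e.
  replace ((INR (S (S l)) - INR b) * e) with (INR (S l) * e + e - INR b * e)
    by (rewrite (S_INR (S l)); ring).
  rewrite S_INR in *. lra.
Qed.

(** * Events and measurable functions *)

Definition measurable {Omega : Type} (F : (Omega -> Prop) -> Prop) (f : Omega -> R) : Prop :=
  forall t, F (fun w => f w <= t).

Lemma event_ext {Omega : Type} (A B : Omega -> Prop) : (forall w, A w <-> B w) -> A = B.
Proof.
  intro H; apply functional_extensionality; intro w; apply propositional_extensionality; auto.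
Qed.

Lemma F_equiv {Omega : Type} {F : (Omega -> Prop) -> Prop} (A B : Omega -> Prop) :
  (forall w, A w <-> B w) -> F B -> F A.
Proof. intro H; rewrite (event_ext A B H); auto. Qed.

Lemma P_equiv {Omega : Type} (P : (Omega -> Prop) -> R) (A B : Omega -> Prop) :
  (forall w, A w <-> B w) -> P A = P B.
Proof. intro H; rewrite (event_ext A B H); auto. Qed.

Section ProbabilitySpace.
Context {Omega : Type} {F : (Omega -> Prop) -> Prop} {P : (Omega -> Prop) -> R}.
Hypothesis HP : is_prob_space F P.

Lemma F_empty : F (fun _ => False).
Proof. apply (F_equiv _ (fun w => ~ True)); [tauto|]. apply (ps_compl F P HP), (ps_full F P HP). Qed.

Lemma F_or A B : F A -> F B -> F (fun w => A w \/ B w).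
Proof.
  intros HA HB.
  apply (F_equiv _ (fun w => exists k, (match k with O => A | S _ => B end) w)).
  - intro w; split.
    + intros [X|X]; [exists O|exists 1%nat]; auto.
    + intros [[|k] X]; auto.
  - apply (ps_union F P HP); intros [|k]; auto.
Qed.

Lemma F_and A B : F A -> F B -> F (fun w => A w /\ B w).
Proof.
  intros HA HB. apply (F_equiv _ (fun w => ~ (~ A w \/ ~ B w))); [intro; tauto|].
  apply (ps_compl F P HP), F_or; apply (ps_compl F P HP); auto.
Qed.

Lemma F_and_prop (C : Prop) A : (C -> F A) -> F (fun w => C /\ A w).
Proof.
  intro H. destruct (classic C) as [HC|HC].
  - apply (F_equiv _ A); [tauto|auto].
  - apply (F_equiv _ (fun _ => False)); [tauto|apply F_empty].
Qed.

Lemma F_imp_prop (C : Prop) A : (C -> F A) -> F (fun w => C -> A w).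
Proof.
  intro H. destruct (classic C) as [HC|HC].
  - apply (F_equiv _ A); [tauto|auto].
  - apply (F_equiv _ (fun _ => True)); [tauto|apply (ps_full F P HP)].
Qed.

Lemma F_forall_lt (A : nat -> Omega -> Prop) k :
  (forall a, (a < k)%nat -> F (A a)) -> F (fun w => forall a, (a < k)%nat -> A a w).
Proof.
  induction k as [|k IH]; intro H.
  - apply (F_equiv _ (fun _ => True)); [intro; split; [auto|lia]|apply (ps_full F P HP)].
  - apply (F_equiv _ (fun w => (forall a, (a < k)%nat -> A a w) /\ A k w)).
    + intro w; split.
      * intro X; split; intros; apply X; lia.
      * intros [X1 X2] a Ha. destruct (Nat.eq_dec a k); [subst; auto|apply X1; lia].
    + apply F_and; [apply IH; intros; apply H; lia|apply H; lia].
Qed.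

Lemma measurable_gt f t : measurable F f -> F (fun w => t < f w).
Proof.
  intro H. apply (F_equiv _ (fun w => ~ f w <= t)); [intro; lra|].
  apply (ps_compl F P HP), H.
Qed.

Lemma measurable_lt f t : measurable F f -> F (fun w => f w < t).
Proof.
  intro H. apply (F_equiv _ (fun w => exists k : nat, f w <= t - / (INR k + 1))).
  - intro w; split.
    + intro Hw. destruct (inv_succ_lt (t - f w)) as [k Hk]; [lra|]. exists k; lra.
    + intros [k Hk]. pose proof (Rinv_0_lt_compat (INR k + 1) ltac:(pose proof (pos_INR k); lra)). lra.
  - apply (ps_union F P HP). intro; apply H.
Qed.

Lemma measurable_const c : measurable F (fun _ => c).
Proof.
  intro t. destruct (Rle_dec c t).
  - apply (F_equiv _ (fun _ => True)); [intro; tauto|apply (ps_full F P HP)].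
  - apply (F_equiv _ (fun _ => False)); [intro; tauto|apply F_empty].
Qed.

Lemma measurable_scal c f : measurable F f -> measurable F (fun w => c * f w).
Proof.
  intros H t. destruct (Rtotal_order c 0) as [Hc|[Hc|Hc]].
  - apply (F_equiv _ (fun w => ~ f w < t / c)).
    + intro w. split; intro X.
      * intro Y. apply (Rmult_lt_gt_compat_neg_l c) in Y; auto.
        replace (c * (t / c)) with t in Y by (field; lra). lra.
      * apply Rnot_lt_le in X. apply (Rmult_le_compat_neg_l c) in X; [|lra].
        replace (c * (t / c)) with t in X by (field; lra). lra.
    + apply (ps_compl F P HP), measurable_lt, H.
  - subst. apply (F_equiv _ (fun _ => 0 <= t)); [intro; split; intros; lra|].
    apply (measurable_const 0).
  - apply (F_equiv _ (fun w => f w <= t / c)); [|apply H].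
    intro w. split; intro X.
    + apply (Rmult_le_reg_l c); auto. replace (c * (t / c)) with t by (field; lra). auto.
    + apply (Rmult_le_compat_l c) in X; [|lra]. replace (c * (t / c)) with t in X by (field; lra). auto.
Qed.

Lemma measurable_plus f g : measurable F f -> measurable F g -> measurable F (fun w => f w + g w).
Proof.
  intros Hf Hg t.
  apply (F_equiv _ (fun w => ~ exists a b d : nat,
     (INR a - INR b) / (INR d + 1) < f w /\ t - (INR a - INR b) / (INR d + 1) < g w)).
  - intro w; split.
    + intros X [a [b [d Y]]]. lra.
    + intro X. apply Rnot_lt_le. intro Y. apply X.
      destruct (dense_ratio (t - g w) (f w)) as [a [b [d Hq]]]; [lra|].
      exists a, b, d; lra.
  - apply (ps_compl F P HP).
    do 3 (apply (ps_union F P HP); intro).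
    apply F_and; apply measurable_gt; auto.
Qed.

Lemma measurable_sumR (f : nat -> Omega -> R) k :
  (forall i, (i < k)%nat -> measurable F (f i)) -> measurable F (fun w => sumR k (fun i => f i w)).
Proof.
  induction k as [|k IH]; intro H; simpl.
  - apply measurable_const.
  - apply measurable_plus; [apply IH; auto|apply H; lia].
Qed.

Lemma P_empty : P (fun _ => False) = 0.
Proof.
  set (c := P (fun _ => False)).
  assert (Hc : 0 <= c) by apply (ps_nonneg F P HP), F_empty.
  assert (Hsum : infinite_sum (fun _ : nat => c) c).
  { pose proof (ps_sigma_add F P HP (fun _ _ => False)) as H.
    rewrite (P_equiv P _ (fun _ => False)) in H by (intro w; split; [intros [_ X]|]; tauto).
    apply H; [intros; apply F_empty|tauto]. }
  destruct (Req_dec c 0) as [E|E]; auto. exfalso.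
  destruct (Hsum c) as [N HN]; [lra|].
  specialize (HN (S N) ltac:(lia)). unfold R_dist in HN. rewrite sum_cte in HN.
  rewrite !S_INR in HN. pose proof (pos_INR N).
  rewrite Rabs_right in HN; nra.
Qed.

Lemma P_disjoint_union A B : F A -> F B -> (forall w, A w -> B w -> False) ->
  P (fun w => A w \/ B w) = P A + P B.
Proof.
  intros HA HB Hdisj.
  set (S := fun k : nat => match k with O => A | 1%nat => B | _ => fun _ : Omega => False end).
  assert (Hsum : infinite_sum (fun k => P (S k)) (P A + P B)).
  { intros e He. exists 1%nat. intros n Hn. unfold R_dist.
    replace (sum_f_R0 (fun k => P (S k)) n) with (P A + P B); [rewrite Rminus_diag, Rabs_R0; auto|].
    induction n as [|n IH]; [lia|]. destruct n as [|n]; [reflexivity|].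
    simpl sum_f_R0 in *. rewrite <- IH by lia. simpl. rewrite P_empty. ring. }
  rewrite (uniqueness_sum _ _ _ Hsum (ps_sigma_add F P HP S ltac:(intros [|[|k]]; simpl; auto; apply F_empty)
      ltac:(intros [|[|i]] [|[|j]] w Hij; simpl; try tauto; try lia; eauto))).
  apply P_equiv. intro w; split.
  - intros [X|X]; [exists O|exists 1%nat]; auto.
  - intros [[|[|k]] X]; simpl in X; tauto.
Qed.

Lemma P_split A B : F A -> F B -> P A = P (fun w => A w /\ B w) + P (fun w => A w /\ ~ B w).
Proof.
  intros HA HB. rewrite <- P_disjoint_union.
  - apply P_equiv; intro w; tauto.
  - apply F_and; auto.
  - apply F_and; [|apply (ps_compl F P HP)]; auto.
  - intros w; tauto.
Qed.

Lemma P_mono A B : F A -> F B -> (forall w, A w -> B w) -> P A <= P B.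
Proof.
  intros HA HB H. rewrite (P_split B A HB HA).
  replace (P (fun w => B w /\ A w)) with (P A) by (apply P_equiv; intro w; split; auto; tauto).
  pose proof (ps_nonneg F P HP (fun w => B w /\ ~ A w)
    ltac:(apply F_and; [|apply (ps_compl F P HP)]; auto)).
  lra.
Qed.

Lemma P_union_le A B : F A -> F B -> P (fun w => A w \/ B w) <= P A + P B.
Proof.
  intros HA HB.
  assert (HBA : F (fun w => B w /\ ~ A w)) by (apply F_and; [|apply (ps_compl F P HP)]; auto).
  rewrite (P_equiv P _ (fun w => A w \/ (B w /\ ~ A w))) by (intro w; tauto).
  rewrite P_disjoint_union by (auto; intros w; tauto).
  pose proof (P_mono _ _ HBA HB (fun w H => proj1 H)). lra.
Qed.

Lemma F_exists_lt (A : nat -> Omega -> Prop) L :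
  (forall l, F (A l)) -> F (fun w => exists l, (l < L)%nat /\ A l w).
Proof. intro H. apply (ps_union F P HP). intro l. apply F_and_prop; auto. Qed.

Lemma exists_lt_S (A : nat -> Omega -> Prop) L w :
  (exists l, (l < S L)%nat /\ A l w) <-> (exists l, (l < L)%nat /\ A l w) \/ A L w.
Proof.
  split.
  - intros [l [Hl X]]. destruct (Nat.eq_dec l L); [subst; auto|left; exists l; split; auto; lia].
  - intros [[l [Hl X]]|X]; [exists l; split; auto; lia|exists L; auto].
Qed.

Lemma P_finite_union_le (A : nat -> Omega -> Prop) L :
  (forall l, F (A l)) -> P (fun w => exists l, (l < L)%nat /\ A l w) <= sumR L (fun l => P (A l)).
Proof.
  intro HA. induction L as [|L IH]; simpl.
  - rewrite <- P_empty. right; apply P_equiv; intro w; split; [intros [l [Hl _]]; lia|tauto].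
  - rewrite (P_equiv P _ _ (exists_lt_S A L)).
    pose proof (P_union_le _ _ (F_exists_lt A L HA) (HA L)). lra.
Qed.

Lemma P_finite_disjoint_union (A : nat -> Omega -> Prop) L :
  (forall l, F (A l)) -> (forall i j w, i <> j -> A i w -> A j w -> False) ->
  P (fun w => exists l, (l < L)%nat /\ A l w) = sumR L (fun l => P (A l)).
Proof.
  intros HA Hdisj. induction L as [|L IH]; simpl.
  - rewrite <- P_empty. apply P_equiv; intro w; split; [intros [l [Hl _]]; lia|tauto].
  - rewrite (P_equiv P _ _ (exists_lt_S A L)), P_disjoint_union, IH; auto.
    + apply F_exists_lt; auto.
    + intros w [l [Hl X]] Y. apply (Hdisj l L w); auto; lia.
Qed.

End ProbabilitySpace.

(** * Finite sums and products *)

Lemma sumR_ext k f g : (forall a, (a < k)%nat -> f a = g a) -> sumR k f = sumR k g.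
Proof. induction k; intro H; simpl; auto. rewrite IHk, H by (auto; intros; apply H; lia); auto. Qed.

Lemma sumR_le k f g : (forall a, (a < k)%nat -> f a <= g a) -> sumR k f <= sumR k g.
Proof.
  induction k; intro H; simpl; [lra|].
  apply Rplus_le_compat; [apply IHk; intros; apply H|apply H]; lia.
Qed.

Lemma sumR_scal k c f : sumR k (fun a => c * f a) = c * sumR k f.
Proof. induction k; simpl; [|rewrite IHk]; ring. Qed.

Lemma sumR_const k c : sumR k (fun _ => c) = INR k * c.
Proof. induction k; simpl sumR; [simpl; ring|]. rewrite IHk, S_INR. ring. Qed.

Lemma sumR_shift k f : sumR (S k) f = f O + sumR k (fun a => f (S a)).
Proof. induction k; simpl in *; [ring|]. rewrite IHk. ring. Qed.

Lemma sumR_rev k f : sumR k (fun a => f (k - 1 - a)%nat) = sumR k f.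
Proof.
  revert f; induction k as [|k IH]; intro f; simpl; auto.
  rewrite Nat.sub_0_r, Nat.sub_diag.
  rewrite (sumR_ext k _ (fun a => f (S (k - 1 - a)))) by (intros a Ha; f_equal; lia).
  rewrite (IH (fun a => f (S a))). pose proof (sumR_shift k f) as E. simpl in E. lra.
Qed.

Lemma sumR_piecewise k h a b f : (h <= k)%nat ->
  sumR k (fun i => (if Nat.ltb i h then a else b) * f i) = a * sumR h f + b * (sumR k f - sumR h f).
Proof.
  intro Hh.
  assert (G : forall j, sumR j (fun i => (if Nat.ltb i h then a else b) * f i)
                = a * sumR (Nat.min h j) f + b * (sumR j f - sumR (Nat.min h j) f)).
  { clear Hh. induction j as [|j IH]; simpl.
    - rewrite Nat.min_0_r. simpl. ring.
    - rewrite IH. destruct (Nat.ltb_spec j h).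
      + rewrite (Nat.min_r h j), (Nat.min_r h (S j)) by lia. simpl. ring.
      + rewrite (Nat.min_l h j), (Nat.min_l h (S j)) by lia. ring. }
  rewrite G, Nat.min_l; auto.
Qed.

Lemma prodR_ext k f g : (forall a, (a < k)%nat -> f a = g a) -> prodR k f = prodR k g.
Proof. induction k; intro H; simpl; auto. rewrite IHk, H by (auto; intros; apply H; lia); auto. Qed.

Lemma prodR_nonneg k f : (forall a, (a < k)%nat -> 0 <= f a) -> 0 <= prodR k f.
Proof.
  induction k; intro H; simpl; [lra|].
  apply Rmult_le_pos; [apply IHk; intros; apply H|apply H]; lia.
Qed.

Lemma prodR_shift k f : prodR (S k) f = f O * prodR k (fun a => f (S a)).
Proof. induction k; simpl in *; [ring|]. rewrite IHk. ring. Qed.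

Lemma prodR_piecewise k h a b : (h <= k)%nat ->
  prodR k (fun i => if Nat.ltb i h then a else b) = a ^ h * b ^ (k - h).
Proof.
  intro Hh.
  assert (G : forall j, prodR j (fun i => if Nat.ltb i h then a else b)
                = a ^ Nat.min h j * b ^ (j - Nat.min h j)).
  { clear Hh. induction j as [|j IH]; cbn [prodR].
    - rewrite Nat.min_0_r. simpl. ring.
    - rewrite IH. destruct (Nat.ltb_spec j h).
      + rewrite (Nat.min_r h j), (Nat.min_r h (S j)), !Nat.sub_diag by lia. simpl. ring.
      + rewrite (Nat.min_l h j), (Nat.min_l h (S j)) by lia.
        replace (S j - h)%nat with (S (j - h)) by lia. simpl. ring. }
  rewrite G, Nat.min_l; auto.
Qed.

Lemma prodR_sub_at k j f g h : (j < k)%nat ->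
  (forall a, a <> j -> f a = h a /\ g a = h a) -> h j = f j - g j ->
  prodR k h = prodR k f - prodR k g.
Proof.
  induction k as [|k IH]; intros Hj Hfg Hh; [lia|]. simpl.
  destruct (Nat.eq_dec j k).
  - subst. rewrite (prodR_ext k f h), (prodR_ext k g h) by (intros a Ha; apply Hfg; lia).
    rewrite Hh; ring.
  - rewrite IH by (auto; lia). destruct (Hfg k) as [E1 E2]; auto. rewrite E1, E2; ring.
Qed.

(** * Real inequalities *)

Lemma exp_le_compat a b : a <= b -> exp a <= exp b.
Proof. intros [H|H]; [left; apply exp_increasing; auto|subst; lra]. Qed.

Lemma exp_mul_INR x k : exp (INR k * x) = exp x ^ k.
Proof.
  induction k as [|k IH]; [simpl; rewrite Rmult_0_l, exp_0; auto|].
  rewrite S_INR, Rmult_plus_distr_r, Rmult_1_l, exp_plus, IH. simpl. ring.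
Qed.

Lemma one_minus_exp_neg_le x : 1 - exp (- x) <= x.
Proof. pose proof (exp_ineq1_le (- x)). lra. Qed.

Lemma one_minus_exp_neg_ge x : 0 <= x -> x / (1 + x) <= 1 - exp (- x).
Proof.
  intro Hx. pose proof (exp_ineq1_le x). rewrite exp_Ropp.
  assert (/ exp x <= / (1 + x)) by (apply Rinv_le_contravar; lra).
  replace (x / (1 + x)) with (1 - / (1 + x)) by (field; lra). lra.
Qed.

Lemma geom_sum_le L r : 0 <= r < 1 -> sumR L (fun l => r ^ l) <= / (1 - r).
Proof.
  intro Hr. assert (E : sumR L (fun l => r ^ l) * (1 - r) = 1 - r ^ L).
  { induction L; simpl; [ring|]. rewrite Rmult_plus_distr_r, IHL. ring. }
  pose proof (pow_le r L ltac:(lra)).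
  apply (Rmult_le_reg_r (1 - r)); [lra|]. rewrite E, Rinv_l by lra. lra.
Qed.

Lemma pow_sub_le a b j : 0 <= b <= a -> a ^ S j - b ^ S j <= INR (S j) * a ^ j * (a - b).
Proof.
  intro H. induction j as [|j IH]; [simpl; lra|].
  assert (b ^ S j <= a ^ S j) by (apply pow_incr; lra).
  replace (a ^ S (S j) - b ^ S (S j)) with (a * (a ^ S j - b ^ S j) + b ^ S j * (a - b)) by (simpl; ring).
  replace (INR (S (S j)) * a ^ S j * (a - b)) with (a * (INR (S j) * a ^ j * (a - b)) + a ^ S j * (a - b))
    by (rewrite (S_INR (S j)); simpl; ring).
  apply Rplus_le_compat; [apply Rmult_le_compat_l|apply Rmult_le_compat_r]; lra.
Qed.

(* The discrete analogue of [L^(j+1) = (j+1) * int_0^L t^j dt]. *)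
Lemma pow_le_sum_pow L j : INR L ^ S j <= INR (S j) * sumR (S L) (fun t => INR t ^ j).
Proof.
  induction L as [|L IH].
  - rewrite pow_i by lia. simpl sumR. rewrite Rplus_0_l.
    apply Rmult_le_pos; [apply pos_INR|apply pow_le; simpl; lra].
  - pose proof (pow_sub_le (INR (S L)) (INR L) j) as H.
    specialize (H ltac:(rewrite S_INR; pose proof (pos_INR L); lra)).
    replace (INR (S L) - INR L) with 1 in H by (rewrite S_INR; ring).
    change (sumR (S (S L)) (fun t => INR t ^ j)) with (sumR (S L) (fun t => INR t ^ j) + INR (S L) ^ j).
    nra.
Qed.

Lemma pow_ge_bernoulli m x : 0 <= x <= 1 -> 1 - INR m * x <= (1 - x) ^ m.
Proof.
  intro Hx. induction m as [|m IH]; [simpl; lra|]. rewrite S_INR.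
  change ((1 - x) ^ S m) with ((1 - x) * (1 - x) ^ m).
  pose proof (pow_le (1 - x) m ltac:(lra)). pose proof (pos_INR m). nra.
Qed.

Lemma exp_ge_cube x : 0 <= x -> (x / 3) ^ 3 <= exp x.
Proof.
  intro Hx. replace x with (INR 3 * (x / 3)) at 2 by (simpl; field).
  rewrite exp_mul_INR. apply pow_incr. pose proof (exp_ineq1_le (x / 3)). lra.
Qed.

Lemma one_plus_exp_neg_le r : 0 <= r <= 3 / 2 -> (1 + r) * exp (- r) <= exp (- (r * r) / 8).
Proof.
  intro Hr. set (x := r - r * r / 8).
  assert (Hx : 0 <= x) by (unfold x; nra).
  assert (H1 : 1 + r <= exp x).
  { replace x with (INR 2 * (x / 2)) by (simpl; field). rewrite exp_mul_INR.
    pose proof (exp_ineq1_le (x / 2)).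
    apply Rle_trans with ((1 + x / 2) ^ 2); [|apply pow_incr; lra].
    unfold x. simpl. nra. }
  replace (- (r * r) / 8) with (x + - r) by (unfold x; field).
  rewrite exp_plus. pose proof (exp_pos (- r)). nra.
Qed.

Lemma exp_mul_pow_le_succ_pow (m : nat) : (1 <= m)%nat -> exp 1 * INR m ^ S m <= INR (S m) ^ S m.
Proof.
  intro Hm. set (M := INR m). replace (INR (S m)) with (M + 1) by (unfold M; rewrite S_INR; ring).
  assert (HM : 1 <= M) by (apply (le_INR 1); auto).
  assert (He : exp (1 / (M + 1)) <= (M + 1) / M).
  { pose proof (exp_ineq1_le (- (1 / (M + 1)))) as H. rewrite exp_Ropp in H.
    assert (H0 : 0 < 1 - 1 / (M + 1)).
    { assert (1 / (M + 1) < 1) by (apply (Rmult_lt_reg_r (M + 1)); [lra|]; field_simplify; lra).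
      lra. }
    replace ((M + 1) / M) with (/ (1 - 1 / (M + 1))) by (field; lra).
    rewrite <- (Rinv_inv (exp (1 / (M + 1)))). apply Rinv_le_contravar; auto. }
  replace (exp 1) with (exp (1 / (M + 1)) ^ S m)
    by (rewrite <- exp_mul_INR; f_equal; rewrite S_INR; fold M; field; lra).
  rewrite <- Rpow_mult_distr. apply pow_incr. split.
  - apply Rmult_le_pos; [left; apply exp_pos|lra].
  - apply Rle_trans with ((M + 1) / M * M); [apply Rmult_le_compat_r; lra|right; field; lra].
Qed.

Lemma fact_le (m : nat) : (1 <= m)%nat -> INR (fact m) <= exp 1 * INR m ^ S m * exp (- INR m).
Proof.
  intro Hm. induction m as [|m IH]; [lia|]. destruct (Nat.eq_dec m 0) as [->|Hm0].
  - assert (E : exp 1 * exp (- (1)) = 1) by (rewrite <- exp_plus, Rplus_opp_r, exp_0; auto).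
    change (INR (fact 1)) with 1. change (INR 1) with 1. rewrite pow1, Rmult_1_r, E. lra.
  - specialize (IH ltac:(lia)). pose proof (exp_mul_pow_le_succ_pow m ltac:(lia)) as Hk.
    change (fact (S m)) with (S m * fact m)%nat. rewrite mult_INR.
    assert (HK : 0 <= INR (S m) * exp (- INR m)) by (apply Rmult_le_pos; [apply pos_INR|left; apply exp_pos]).
    apply Rle_trans with (INR (S m) * exp (- INR m) * (exp 1 * INR m ^ S m)).
    { apply Rle_trans with (INR (S m) * (exp 1 * INR m ^ S m * exp (- INR m)));
        [apply Rmult_le_compat_l; [apply pos_INR|auto]|right; ring]. }
    apply Rle_trans with (INR (S m) * exp (- INR m) * INR (S m) ^ S m); [apply Rmult_le_compat_l; auto|].
    replace (exp (- INR m)) with (exp 1 * exp (- INR (S m))) by (rewrite <- exp_plus; f_equal; rewrite S_INR; ring).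
    change (INR (S m) ^ S (S m)) with (INR (S m) * INR (S m) ^ S m). right; ring.
Qed.

(** * Independent exponential variables *)

(* [exp_mass nn a b] is the probability that an exponential variable of mean [nn] lies in [(a, b]]. *)
Definition exp_mass (nn a b : R) : R := exp (- a / nn) - exp (- b / nn).

Lemma exp_mass_nonneg nn a b : 0 < nn -> a <= b -> 0 <= exp_mass nn a b.
Proof.
  intros Hn H. unfold exp_mass. assert (- b / nn <= - a / nn).
  { unfold Rdiv. apply Rmult_le_compat_r; [left; apply Rinv_0_lt_compat|]; lra. }
  pose proof (exp_le_compat _ _ H0). lra.
Qed.

Lemma exp_mass_ge nn a d : 0 < nn -> 0 <= d -> exp (- (a + d) / nn) * (d / nn) <= exp_mass nn a (a + d).
Proof.
  intros Hn Hd. unfold exp_mass.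
  replace (- a / nn) with (- (a + d) / nn + d / nn) by (field; lra).
  rewrite exp_plus. pose proof (exp_ineq1_le (d / nn)). pose proof (exp_pos (- (a + d) / nn)). nra.
Qed.

(* Riemann sum of [E exp(-g Y) = 1/(1 + g nn)] over cells of width [d], up to a factor [1 - eps]. *)
Lemma laplace_sum_le nn g eps L : 0 < nn -> 0 < g -> 0 < eps < 1 ->
  let d := nn * eps / (1 + g * nn) in
  sumR L (fun l => exp (- g * (INR l * d)) * exp_mass nn (INR l * d) (INR (S l) * d))
    <= / ((1 + g * nn) * (1 - eps)).
Proof.
  intros Hn Hg Heps d. assert (HG0 : 1 + g * nn <> 0) by nra. assert (Hn0 : nn <> 0) by lra.
  set (G := 1 + g * nn) in *. assert (HG : 1 < G) by (unfold G; nra).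
  set (r := exp (- eps)).
  assert (Hterm : forall l, exp (- g * (INR l * d)) * exp_mass nn (INR l * d) (INR (S l) * d)
                    = (1 - exp (- (eps / G))) * r ^ l).
  { intro l. unfold r, exp_mass. rewrite <- exp_mul_INR, S_INR.
    replace (- ((INR l + 1) * d) / nn) with (- (INR l * d) / nn + - (eps / G)) by (unfold d, G; field; auto).
    replace (INR l * - eps) with (- g * (INR l * d) + - (INR l * d) / nn) by (unfold d, G; field; auto).
    rewrite !exp_plus. ring. }
  rewrite (sumR_ext L _ _ (fun l _ => Hterm l)), sumR_scal.
  assert (Hr : 0 <= r < 1).
  { split; [left; apply exp_pos|]. rewrite <- exp_0. apply exp_increasing. lra. }
  pose proof (geom_sum_le L r Hr) as Hgeom.
  pose proof (one_minus_exp_neg_le (eps / G)) as Hup.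
  pose proof (one_minus_exp_neg_ge eps ltac:(lra)) as Hlow. fold r in Hlow.
  assert (HeG : 0 <= 1 - exp (- (eps / G))).
  { assert (exp (- (eps / G)) <= 1); [|lra].
    rewrite <- exp_0. apply exp_le_compat. assert (0 < eps / G) by (apply Rdiv_lt_0_compat; lra). lra. }
  apply Rle_trans with ((eps / G) * / (1 - r)).
  { apply Rle_trans with ((1 - exp (- (eps / G))) * / (1 - r)); [apply Rmult_le_compat_l; auto|].
    apply Rmult_le_compat_r; auto. left; apply Rinv_0_lt_compat; lra. }
  apply Rle_trans with ((eps / G) * ((1 + eps) / eps)).
  { apply Rmult_le_compat_l; [left; apply Rdiv_lt_0_compat; lra|].
    replace ((1 + eps) / eps) with (/ (eps / (1 + eps))) by (field; lra).
    apply Rinv_le_contravar; [apply Rdiv_lt_0_compat|]; lra. }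
  replace (eps / G * ((1 + eps) / eps)) with ((1 + eps) / G) by (field; lra).
  apply (Rmult_le_reg_l (G * (1 - eps))); [nra|].
  replace (G * (1 - eps) * / (G * (1 - eps))) with 1 by (field; nra).
  replace (G * (1 - eps) * ((1 + eps) / G)) with ((1 - eps) * (1 + eps)) by (field; lra). nra.
Qed.

(* A lower bound for [P(Y_0 + ... + Y_(j-1) <= s)], for [j] independent exponentials of mean [nn]:
   the Erlang tail bound [exp (- s / nn) * (s / nn) ^ j / j!], with [s] shrunk by [j * eps] to pay for
   discretising each convolution step with cells of width at most [eps]. *)
Definition erlang_lower (nn eps : R) (j : nat) (s : R) : R :=
  if Rle_dec (INR j * eps) s then exp (- s / nn) * ((s - INR j * eps) / nn) ^ j / INR (fact j) else 0.

Section ErlangStep.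
Variables (nn eps d s : R) (j L : nat).
Hypotheses (Hnn : 0 < nn) (Hd : 0 < d <= eps) (HL : (1 <= L)%nat) (HLd : INR L * d = s - INR j * eps).

Lemma erlang_lower_cell l : (l < L)%nat ->
  exp (- s / nn) * (d / nn) ^ S j / INR (fact j) * INR (L - 1 - l) ^ j
    <= erlang_lower nn eps j (s - INR (S l) * d) * exp_mass nn (INR l * d) (INR (S l) * d).
Proof.
  intro Hl. unfold erlang_lower.
  assert (E : s - INR (S l) * d - INR j * eps = INR (L - 1 - l) * d)
    by (rewrite !minus_INR, S_INR by lia; simpl INR; lra).
  destruct (Rle_dec (INR j * eps) (s - INR (S l) * d)) as [C|C];
    [|exfalso; apply C; pose proof (pos_INR (L - 1 - l)); nra].
  rewrite E.
  pose proof (exp_mass_ge nn (INR l * d) d Hnn ltac:(lra)) as Hm.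
  replace (INR l * d + d) with (INR (S l) * d) in Hm by (rewrite S_INR; ring).
  assert (Hf : 0 < INR (fact j)) by apply lt_0_INR, lt_O_fact.
  assert (Hp : 0 <= (INR (L - 1 - l) * d / nn) ^ j).
  { apply pow_le. apply Rmult_le_pos; [apply Rmult_le_pos; [apply pos_INR|lra]|].
    left; apply Rinv_0_lt_compat; auto. }
  apply Rle_trans with (exp (- (s - INR (S l) * d) / nn) * (INR (L - 1 - l) * d / nn) ^ j / INR (fact j) *
                          (exp (- (INR (S l) * d) / nn) * (d / nn))).
  - right. replace (- s / nn) with (- (s - INR (S l) * d) / nn + - (INR (S l) * d) / nn) by (field; lra).
    rewrite exp_plus. replace (INR (L - 1 - l) * d / nn) with (INR (L - 1 - l) * (d / nn)) by (field; lra).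
    rewrite Rpow_mult_distr. simpl. field. lra.
  - apply Rmult_le_compat_l; auto.
    apply Rmult_le_pos; [apply Rmult_le_pos; [left; apply exp_pos|auto]|left; apply Rinv_0_lt_compat; auto].
Qed.

(* Discretised convolution of the Erlang bound with the exponential density. *)
Lemma erlang_lower_step : INR (S j) * eps <= s ->
  erlang_lower nn eps (S j) s
    <= sumR L (fun l => erlang_lower nn eps j (s - INR (S l) * d) * exp_mass nn (INR l * d) (INR (S l) * d)).
Proof.
  intro Hs. eapply Rle_trans; [|apply sumR_le; intros l Hl; apply erlang_lower_cell; auto].
  set (A := exp (- s / nn) * (d / nn) ^ S j / INR (fact j)).
  assert (HA : 0 <= A).
  { unfold A. apply Rmult_le_pos; [apply Rmult_le_pos; [left; apply exp_pos|apply pow_le]|].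
    - apply Rmult_le_pos; [lra|left; apply Rinv_0_lt_compat; auto].
    - left; apply Rinv_0_lt_compat, lt_0_INR, lt_O_fact. }
  rewrite sumR_scal, (sumR_rev L (fun t => INR t ^ j)).
  pose proof (pow_le_sum_pow (L - 1) j) as Hpow. replace (S (L - 1)) with L in Hpow by lia.
  rewrite minus_INR in Hpow by lia. change (INR 1) with 1 in Hpow.
  assert (HSj : 0 < INR (S j)) by (apply lt_0_INR; lia).
  unfold erlang_lower. destruct (Rle_dec (INR (S j) * eps) s) as [_|C]; [|contradiction].
  assert (Hx : 0 <= s - INR (S j) * eps <= (INR L - 1) * d) by (rewrite S_INR in *; nra).
  apply Rle_trans with (A * ((INR L - 1) ^ S j / INR (S j))).
  - unfold A. change (fact (S j)) with (S j * fact j)%nat. rewrite mult_INR.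
    replace (exp (- s / nn) * (d / nn) ^ S j / INR (fact j) * ((INR L - 1) ^ S j / INR (S j)))
      with (exp (- s / nn) * ((INR L - 1) * d / nn) ^ S j / (INR (S j) * INR (fact j)))
      by (replace ((INR L - 1) * d / nn) with ((INR L - 1) * (d / nn)) by (field; lra);
          rewrite Rpow_mult_distr; field; repeat split; (apply INR_fact_neq_0 || lra)).
    unfold Rdiv. apply Rmult_le_compat_r; [left; apply Rinv_0_lt_compat, Rmult_lt_0_compat; auto; apply lt_0_INR, lt_O_fact|].
    apply Rmult_le_compat_l; [left; apply exp_pos|]. apply pow_incr.
    assert (0 < / nn) by (apply Rinv_0_lt_compat; auto).
    split; [apply Rmult_le_pos|apply Rmult_le_compat_r]; lra.
  - apply Rmult_le_compat_l; auto.
    apply (Rmult_le_reg_l (INR (S j))); auto.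
    replace (INR (S j) * ((INR L - 1) ^ S j / INR (S j))) with ((INR L - 1) ^ S j) by (field; lra). auto.
Qed.

End ErlangStep.

Definition upd (f : nat -> R) (j : nat) (x : R) : nat -> R :=
  fun i => if Nat.eq_dec i j then x else f i.

Section ExponentialSample.
Context {Omega : Type} {F : (Omega -> Prop) -> Prop} {P : (Omega -> Prop) -> R}.
Hypothesis HP : is_prob_space F P.
Variables (m : nat) (nn : R) (Y : nat -> Omega -> R).
Hypothesis Hnn : 0 < nn.
Hypothesis HYmeas : forall i, (i < m)%nat -> measurable F (Y i).
Hypothesis HYcdf : forall t, (forall a, (a < m)%nat -> 0 <= t a) ->
  P (fun w => forall a, (a < m)%nat -> Y a w <= t a) = prodR m (fun a => 1 - exp (- t a / nn)).

(* Lower bounds only on the first [j] coordinates: removing them one at a time reduces box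
   probabilities to the joint distribution function. *)
Definition partial_box (j : nat) (lo hi : nat -> R) (w : Omega) : Prop :=
  forall a, (a < m)%nat -> ((a < j)%nat -> lo a < Y a w) /\ Y a w <= hi a.

Lemma F_partial_box j lo hi : F (partial_box j lo hi).
Proof.
  apply (F_forall_lt HP). intros a Ha. apply (F_and HP).
  - apply (F_imp_prop HP). intros _. apply (measurable_gt HP), HYmeas; auto.
  - apply HYmeas; auto.
Qed.

Lemma partial_box_split j lo hi : (j < m)%nat -> (forall a, (a < m)%nat -> lo a <= hi a) ->
  P (partial_box j lo hi) = P (partial_box (S j) lo hi) + P (partial_box j lo (upd hi j (lo j))).
Proof.
  intros Hj Hlh. unfold partial_box, upd.
  rewrite (P_split HP _ (fun w => lo j < Y j w)) by (apply F_partial_box || (apply (measurable_gt HP), HYmeas; auto)).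
  f_equal; apply P_equiv; intro w; split.
  - intros [X1 X2] a Ha. destruct (X1 a Ha) as [X3 X4]. split; auto.
    intro. destruct (Nat.eq_dec a j); [subst; auto|apply X3; lia].
  - intro X; split; [intros a Ha; destruct (X a Ha); split; auto; intro; apply H; lia|]. apply X; lia.
  - intros [X1 X2] a Ha. destruct (X1 a Ha). split; auto. destruct (Nat.eq_dec a j); [subst; lra|auto].
  - intro X. split.
    + intros a Ha. destruct (X a Ha) as [X1 X2]. split; auto.
      destruct (Nat.eq_dec a j); [subst; specialize (Hlh j Ha); lra|auto].
    + destruct (X j Hj) as [_ X2]. destruct (Nat.eq_dec j j); [lra|congruence].
Qed.

Lemma partial_box_prob lo j : (j <= m)%nat -> forall hi, (forall a, (a < m)%nat -> 0 <= lo a <= hi a) ->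
  P (partial_box j lo hi)
    = prodR m (fun a => if Nat.ltb a j then exp_mass nn (lo a) (hi a) else 1 - exp (- hi a / nn)).
Proof.
  induction j as [|j IH]; intros Hj hi Hhi.
  - rewrite (prodR_ext m _ (fun a => 1 - exp (- hi a / nn))) by reflexivity.
    rewrite <- HYcdf by (intros a Ha; specialize (Hhi a Ha); lra).
    apply P_equiv. intro w; unfold partial_box; split; intros X a Ha; [apply X; auto|split; [lia|auto]].
  - set (hi' := upd hi j (lo j)).
    assert (Hhi' : forall a, (a < m)%nat -> 0 <= lo a <= hi' a).
    { intros a Ha; unfold hi', upd; destruct (Nat.eq_dec a j); [subst; specialize (Hhi j Ha); lra|auto]. }
    assert (E := partial_box_split j lo hi ltac:(lia) ltac:(intros a Ha; specialize (Hhi a Ha); lra)).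
    fold hi' in E. rewrite (IH ltac:(lia) hi Hhi), (IH ltac:(lia) hi' Hhi') in E.
    rewrite (prodR_sub_at m j
      (fun a => if Nat.ltb a j then exp_mass nn (lo a) (hi a) else 1 - exp (- hi a / nn))
      (fun a => if Nat.ltb a j then exp_mass nn (lo a) (hi' a) else 1 - exp (- hi' a / nn))); [lra|lia| |].
    + intros a Hne. unfold hi', upd. destruct (Nat.eq_dec a j); [congruence|].
      destruct (Nat.ltb_spec a j), (Nat.ltb_spec a (S j)); try lia; split; reflexivity.
    + unfold hi', upd. destruct (Nat.eq_dec j j); [|congruence].
      rewrite (proj2 (Nat.ltb_ge j j)), (proj2 (Nat.ltb_lt j (S j))) by lia. unfold exp_mass. ring.
Qed.

Lemma box_prob lo hi : (forall a, (a < m)%nat -> 0 <= lo a <= hi a) ->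
  P (fun w => forall a, (a < m)%nat -> lo a < Y a w <= hi a) = prodR m (fun a => exp_mass nn (lo a) (hi a)).
Proof.
  intro Hlh. rewrite (P_equiv P _ (partial_box m lo hi)), partial_box_prob; auto.
  - apply prodR_ext. intros a Ha. destruct (Nat.ltb_spec a m); [reflexivity|lia].
  - intro w; unfold partial_box; split; intros X a Ha; destruct (X a Ha); auto.
Qed.

Definition tail_box (j : nat) (lo hi : nat -> R) (w : Omega) : Prop :=
  forall i, (j <= i < m)%nat -> lo i < Y i w <= hi i.

Definition tail_mass (j : nat) (lo hi : nat -> R) : R :=
  prodR (m - j) (fun t => exp_mass nn (lo (j + t)%nat) (hi (j + t)%nat)).

Lemma F_tail_box j lo hi : F (tail_box j lo hi).
Proof.
  apply (F_equiv _ (fun w => forall i, (i < m)%nat -> (j <= i)%nat -> lo i < Y i w <= hi i)).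
  - intro w; unfold tail_box; split; [intros X i Hi Hji|intros X i Hi]; apply X; lia.
  - apply (F_forall_lt HP). intros i Hi. apply (F_imp_prop HP). intros _.
    apply (F_and HP); [apply (measurable_gt HP)|]; apply HYmeas; auto.
Qed.

Lemma tail_box_upd j lo hi x y w : (j < m)%nat ->
  tail_box j (upd lo j x) (upd hi j y) w <-> x < Y j w <= y /\ tail_box (S j) lo hi w.
Proof.
  intro Hj. unfold tail_box, upd. split.
  - intro X. split.
    + specialize (X j ltac:(lia)). destruct (Nat.eq_dec j j); [auto|congruence].
    + intros i Hi. specialize (X i ltac:(lia)). destruct (Nat.eq_dec i j); [lia|auto].
  - intros [X1 X2] i Hi. destruct (Nat.eq_dec i j); [subst; auto|apply X2; lia].
Qed.

Lemma tail_mass_nonneg j lo hi : (forall i, (j <= i < m)%nat -> lo i <= hi i) -> 0 <= tail_mass j lo hi.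
Proof. intro H. apply prodR_nonneg. intros a Ha. apply exp_mass_nonneg; auto. apply H; lia. Qed.

Lemma tail_mass_upd j lo hi x y : (j < m)%nat ->
  tail_mass j (upd lo j x) (upd hi j y) = exp_mass nn x y * tail_mass (S j) lo hi.
Proof.
  intro Hj. unfold tail_mass. replace (m - j)%nat with (S (m - S j)) by lia.
  rewrite prodR_shift. unfold upd. rewrite Nat.add_0_r.
  destruct (Nat.eq_dec j j); [|congruence]. f_equal.
  apply prodR_ext. intros a Ha. replace (j + S a)%nat with (S j + a)%nat by lia.
  destruct (Nat.eq_dec (S j + a) j); [lia|auto].
Qed.

Lemma tail_box_mass_0 lo hi : (forall i, (i < m)%nat -> 0 <= lo i <= hi i) ->
  P (tail_box 0 lo hi) = tail_mass 0 lo hi.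
Proof.
  intro Hlh. unfold tail_mass. rewrite Nat.sub_0_r, <- box_prob by auto.
  apply P_equiv. intro w; unfold tail_box; split; intros X i Hi; apply X; lia.
Qed.

Definition wsum (g : nat -> R) (j : nat) (w : Omega) : R := sumR j (fun i => g i * Y i w).

Definition pos_upto (j : nat) (w : Omega) : Prop := forall i, (i < j)%nat -> 0 < Y i w.

Definition chernoff_event (g : nat -> R) (j : nat) (T : R) (lo hi : nat -> R) (w : Omega) : Prop :=
  wsum g j w <= T /\ pos_upto j w /\ tail_box j lo hi w.

Lemma F_wsum_le g j T : (j <= m)%nat -> F (fun w => wsum g j w <= T).
Proof.
  intro Hj. apply (measurable_sumR HP (fun i w => g i * Y i w)). intros i Hi.
  apply (measurable_scal HP), HYmeas. lia.
Qed.

Lemma F_chernoff_event g j T lo hi : (j <= m)%nat -> F (chernoff_event g j T lo hi).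
Proof.
  intro Hj. apply (F_and HP); [apply F_wsum_le; auto|apply (F_and HP); [|apply F_tail_box]].
  apply (F_forall_lt HP). intros i Hi. apply (measurable_gt HP), HYmeas. lia.
Qed.

Lemma wsum_nonneg g j w : (forall i, 0 < g i) -> pos_upto j w -> 0 <= wsum g j w.
Proof.
  intros Hg Hp. unfold wsum. replace 0 with (sumR j (fun _ => 0)) by (rewrite sumR_const; ring).
  apply sumR_le. intros i Hi. apply Rmult_le_pos; [left; apply Hg|left; apply Hp; auto].
Qed.

Lemma chernoff_event_cover g j T lo hi d L w : (j < m)%nat -> (forall i, 0 < g i) -> 0 < d ->
  T <= g j * (INR L * d) -> chernoff_event g (S j) T lo hi w ->
  exists l, (l < L)%nat /\
    chernoff_event g j (T - g j * (INR l * d)) (upd lo j (INR l * d)) (upd hi j (INR (S l) * d)) w.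
Proof.
  intros Hj Hg Hd HL [Hsum [Hpos Hbox]].
  assert (Hpj : pos_upto j w) by (intros i Hi; apply Hpos; lia).
  assert (HY : 0 < Y j w) by (apply Hpos; lia).
  pose proof (wsum_nonneg g j w Hg Hpj). specialize (Hg j).
  destruct (nat_cell d (Y j w) Hd HY) as [l [Hl1 Hl2]].
  assert (Hgl : g j * (INR l * d) < g j * Y j w) by (apply Rmult_lt_compat_l; auto).
  unfold wsum in *. simpl in Hsum.
  exists l. split.
  - apply INR_lt. apply (Rmult_lt_reg_r d); auto. apply (Rmult_lt_reg_l (g j)); auto. lra.
  - split; [unfold wsum; lra|split; [auto|apply tail_box_upd; auto]].
Qed.

Section Chernoff.
Variables (g : nat -> R) (eps : R).
Hypothesis Hg : forall i, 0 < g i.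
Hypothesis Heps : 0 < eps < 1.

(* [E exp (- g_i Y_i) = 1 / (1 + g_i nn)], inflated by [1 / (1 - eps)] to pay for the discretisation. *)
Definition chernoff_factor (i : nat) : R := / ((1 + g i * nn) * (1 - eps)).

Definition chernoff_holds (j : nat) : Prop :=
  forall T lo hi, (forall i, (j <= i < m)%nat -> 0 <= lo i <= hi i) ->
  P (chernoff_event g j T lo hi) <= exp T * prodR j chernoff_factor * tail_mass j lo hi.

Lemma chernoff_factor_prod_nonneg j : 0 <= prodR j chernoff_factor.
Proof.
  apply prodR_nonneg. intros a _. left. apply Rinv_0_lt_compat.
  specialize (Hg a). apply Rmult_lt_0_compat; nra.
Qed.

Lemma chernoff_holds_0 : chernoff_holds 0.
Proof.
  intros T lo hi Hlh.
  assert (Hmass : 0 <= tail_mass 0 lo hi) by (apply tail_mass_nonneg; intros i Hi; apply Hlh; lia).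
  simpl prodR. destruct (Rle_dec 0 T) as [HT|HT].
  - apply Rle_trans with (P (tail_box 0 lo hi)).
    { apply (P_mono HP); [apply F_chernoff_event; lia|apply F_tail_box|intros w [_ [_ X]]; auto]. }
    rewrite tail_box_mass_0 by (intros i Hi; apply Hlh; lia).
    pose proof (exp_ineq1_le T). nra.
  - replace (P (chernoff_event g 0 T lo hi)) with 0; [pose proof (exp_pos T); nra|].
    rewrite <- (P_empty HP). apply P_equiv. intro w.
    unfold chernoff_event, wsum; simpl; split; [tauto|intros [X _]; lra].
Qed.

(* Cover the event by the cells of [Y j], apply the bound for [j] on each cell and sum the
   resulting discretised Laplace transform of [Y j]. *)
Lemma chernoff_holds_S j : (j < m)%nat -> chernoff_holds j -> chernoff_holds (S j).
Proof.
  intros Hj IH T lo hi Hlh. pose proof (Hg j) as Hgj.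
  set (d := nn * eps / (1 + g j * nn)).
  assert (Hd : 0 < d) by (unfold d; apply Rdiv_lt_0_compat; nra).
  destruct (INR_archimed (g j * d) T ltac:(nra)) as [L HL].
  set (piece := fun l => chernoff_event g j (T - g j * (INR l * d)) (upd lo j (INR l * d)) (upd hi j (INR (S l) * d))).
  assert (Hpiece : forall l, F (piece l)) by (intro l; apply F_chernoff_event; lia).
  set (C := exp T * prodR j chernoff_factor * tail_mass (S j) lo hi).
  assert (HC : 0 <= C).
  { pose proof (exp_pos T). pose proof (chernoff_factor_prod_nonneg j).
    assert (0 <= tail_mass (S j) lo hi) by (apply tail_mass_nonneg; intros i Hi; apply Hlh; lia).
    unfold C. apply Rmult_le_pos; [apply Rmult_le_pos|]; lra. }
  apply Rle_trans with (P (fun w => exists l, (l < L)%nat /\ piece l w)).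
  { apply (P_mono HP); [apply F_chernoff_event; auto|apply (F_exists_lt HP); auto|].
    intros w Hw. apply (chernoff_event_cover g j T lo hi d L w); [lia|auto|auto| |auto].
    rewrite <- Rmult_assoc, (Rmult_comm (g j)), Rmult_assoc. lra. }
  eapply Rle_trans; [apply (P_finite_union_le HP); auto|].
  apply Rle_trans with (sumR L (fun l => C * (exp (- g j * (INR l * d)) * exp_mass nn (INR l * d) (INR (S l) * d)))).
  { apply sumR_le. intros l Hl. eapply Rle_trans; [apply IH|].
    - intros i Hi. unfold upd. destruct (Nat.eq_dec i j).
      + pose proof (pos_INR l). rewrite S_INR. nra.
      + apply Hlh; lia.
    - rewrite tail_mass_upd by lia.
      replace (T - g j * (INR l * d)) with (T + - g j * (INR l * d)) by ring.
      rewrite exp_plus. right; unfold C; ring. }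
  rewrite sumR_scal.
  replace (exp T * prodR (S j) chernoff_factor * tail_mass (S j) lo hi) with (C * chernoff_factor j)
    by (unfold C; simpl; ring).
  apply Rmult_le_compat_l; auto. apply laplace_sum_le; auto.
Qed.

Lemma chernoff_holds_le j : (j <= m)%nat -> chernoff_holds j.
Proof.
  induction j as [|j IH]; intro Hj; [apply chernoff_holds_0|].
  apply chernoff_holds_S; [lia|apply IH; lia].
Qed.

Lemma chernoff_bound T : (forall i, (i < m)%nat -> P (fun w => Y i w <= 0) = 0) ->
  P (fun w => wsum g m w <= T) <= exp T * prodR m chernoff_factor.
Proof.
  intros Hpos.
  set (neg := fun i w => (i < m)%nat /\ Y i w <= 0).
  assert (Hneg : forall i, F (neg i)) by (intro i; apply (F_and_prop HP); intro; apply HYmeas; auto).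
  assert (Hcore := chernoff_holds_le m (le_n m) T (fun _ => 0) (fun _ => 0) ltac:(intros; lia)).
  unfold tail_mass in Hcore. rewrite Nat.sub_diag, Rmult_1_r in Hcore.
  apply Rle_trans with (P (fun w => chernoff_event g m T (fun _ => 0) (fun _ => 0) w \/
                                  exists i, (i < m)%nat /\ neg i w)).
  { apply (P_mono HP); [apply F_wsum_le; auto|apply (F_or HP); [apply F_chernoff_event|apply (F_exists_lt HP)]; auto|].
    intros w Hw. destruct (classic (exists i, (i < m)%nat /\ neg i w)) as [X|X]; [right; auto|left].
    split; [auto|split; [|intros i Hi; lia]].
    intros i Hi. apply Rnot_le_lt. intro. apply X. exists i. split; [|split]; auto. }
  eapply Rle_trans; [apply (P_union_le HP); [apply F_chernoff_event|apply (F_exists_lt HP)]; auto|].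
  pose proof (P_finite_union_le HP neg m Hneg) as Hunion.
  rewrite (sumR_ext m _ (fun _ => 0)), sumR_const, Rmult_0_r in Hunion.
  - pose proof (ps_nonneg F P HP _ (F_exists_lt HP neg m Hneg)). lra.
  - intros i Hi. rewrite <- (Hpos i Hi). apply P_equiv. intro w; unfold neg; tauto.
Qed.

End Chernoff.

Lemma F_sum_tail_box j s lo hi : (j <= m)%nat ->
  F (fun w => sumR j (fun i => Y i w) <= s /\ tail_box j lo hi w).
Proof.
  intro Hj. apply (F_and HP); [|apply F_tail_box].
  apply (measurable_sumR HP (fun i => Y i)). intros i Hi. apply HYmeas. lia.
Qed.

Section Erlang.
Variable eps : R.
Hypothesis Heps : 0 < eps.

Definition erlang_holds (j : nat) : Prop :=
  forall s lo hi, (forall i, (j <= i < m)%nat -> 0 <= lo i <= hi i) ->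
  erlang_lower nn eps j s * tail_mass j lo hi <= P (fun w => sumR j (fun i => Y i w) <= s /\ tail_box j lo hi w).

Lemma erlang_holds_0 : erlang_holds 0.
Proof.
  intros s lo hi Hlh. unfold erlang_lower. simpl INR. rewrite Rmult_0_l.
  destruct (Rle_dec 0 s) as [Hs|Hs].
  - rewrite (P_equiv P _ (tail_box 0 lo hi)) by (intro w; simpl; split; [intros [_ X]; auto|intro X; split; [lra|auto]]).
    rewrite tail_box_mass_0 by (intros i Hi; apply Hlh; lia).
    assert (Hmass : 0 <= tail_mass 0 lo hi) by (apply tail_mass_nonneg; intros i Hi; apply Hlh; lia).
    assert (exp (- s / nn) <= 1).
    { rewrite <- exp_0. apply exp_le_compat. unfold Rdiv. pose proof (Rinv_0_lt_compat nn Hnn). nra. }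
    simpl. unfold Rdiv. rewrite Rinv_1. nra.
  - rewrite Rmult_0_l. apply (ps_nonneg F P HP), F_sum_tail_box. lia.
Qed.

(* The event for [S j] contains the disjoint union over the cells of [Y j]; on each cell apply the
   bound for [j], and the sum over cells dominates the next Erlang bound. *)
Lemma erlang_holds_S j : (j < m)%nat -> erlang_holds j -> erlang_holds (S j).
Proof.
  intros Hj IH s lo hi Hlh.
  destruct (Rle_dec (INR (S j) * eps) s) as [Hs|Hs].
  2:{ unfold erlang_lower. destruct (Rle_dec (INR (S j) * eps) s); [contradiction|].
      rewrite Rmult_0_l. apply (ps_nonneg F P HP), F_sum_tail_box. lia. }
  destruct (cell_count eps (s - INR j * eps)) as [L [d [HL [Hd HLd]]]]; [rewrite S_INR in Hs; lra|].
  set (piece := fun l w => sumR j (fun i => Y i w) <= s - INR (S l) * d /\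
                           tail_box j (upd lo j (INR l * d)) (upd hi j (INR (S l) * d)) w).
  assert (Hpiece : forall l, F (piece l)) by (intro l; apply F_sum_tail_box; lia).
  assert (Hmass : 0 <= tail_mass (S j) lo hi) by (apply tail_mass_nonneg; intros i Hi; apply Hlh; lia).
  apply Rle_trans with (sumR L (fun l => P (piece l))).
  { apply Rle_trans with (sumR L (fun l => erlang_lower nn eps j (s - INR (S l) * d)
                                  * exp_mass nn (INR l * d) (INR (S l) * d)) * tail_mass (S j) lo hi).
    { apply Rmult_le_compat_r; auto. apply erlang_lower_step; auto. }
    rewrite Rmult_comm, <- sumR_scal. apply sumR_le. intros l Hl.
    eapply Rle_trans; [|apply IH].
    - rewrite tail_mass_upd by lia. right; ring.
    - intros i Hi. unfold upd. destruct (Nat.eq_dec i j).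
      + pose proof (pos_INR l). rewrite S_INR. nra.
      + apply Hlh; lia. }
  rewrite <- (P_finite_disjoint_union HP); auto.
  - apply (P_mono HP); [apply (F_exists_lt HP); auto|apply F_sum_tail_box; auto|].
    intros w [l [Hl [X1 X2]]]. apply tail_box_upd in X2; [|lia]. destruct X2 as [[X2 X3] X4].
    split; [simpl; lra|auto].
  - intros a b w Hab [_ Xa] [_ Xb]. apply tail_box_upd in Xa, Xb; try lia.
    destruct Xa as [Xa _], Xb as [Xb _].
    destruct (Nat.lt_total a b) as [H|[H|H]]; [|congruence|].
    + assert (INR (S a) <= INR b) by (apply le_INR; lia). nra.
    + assert (INR (S b) <= INR a) by (apply le_INR; lia). nra.
Qed.

Lemma erlang_holds_le j : (j <= m)%nat -> erlang_holds j.
Proof.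
  induction j as [|j IH]; intro Hj; [apply erlang_holds_0|].
  apply erlang_holds_S; [lia|apply IH; lia].
Qed.

Lemma erlang_lower_le_prob s : erlang_lower nn eps m s <= P (fun w => sumR m (fun i => Y i w) <= s).
Proof.
  pose proof (erlang_holds_le m (le_n m) s (fun _ => 0) (fun _ => 0) ltac:(intros; lia)) as H.
  unfold tail_mass in H. rewrite Nat.sub_diag, Rmult_1_r in H.
  eapply Rle_trans; [apply H|]. right. apply P_equiv. intro w; unfold tail_box; split; [tauto|].
  intro X; split; [auto|intros; lia].
Qed.
End Erlang.
End ExponentialSample.

(** * Weights along a path of W_n *)

Section PathWeights.
Context {Omega : Type} {F : (Omega -> Prop) -> Prop} {P : (Omega -> Prop) -> R}.
Variables (n m : nat) (W : nat -> nat -> Omega -> R) (v : nat -> nat).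
Hypothesis Hiid : iid_exp_weights n F P W.
Hypothesis Hpath : is_path n m v.

Definition path_weight (i : nat) : Omega -> R := edge_weight W (v i) (v (S i)).

Definition edge_lo (a : nat) : nat := Nat.min (v a) (v (S a)).
Definition edge_hi (a : nat) : nat := Nat.max (v a) (v (S a)).

Lemma path_weight_edge a : (a < m)%nat -> path_weight a = W (edge_lo a) (edge_hi a).
Proof.
  intro Ha. destruct Hpath as [_ Hinj]. assert (v a <> v (S a)) by (intro E; apply Hinj in E; lia).
  unfold path_weight, edge_weight, edge_lo, edge_hi. destruct (Nat.ltb_spec (v a) (v (S a))).
  - rewrite Nat.min_l, Nat.max_r by lia; auto.
  - rewrite Nat.min_r, Nat.max_l by lia; auto.
Qed.

Lemma path_edge_valid a : (a < m)%nat -> (edge_lo a < edge_hi a < n)%nat.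
Proof.
  intro Ha. destruct Hpath as [Hrange Hinj].
  assert (v a <> v (S a)) by (intro E; apply Hinj in E; lia).
  pose proof (Hrange a ltac:(lia)). pose proof (Hrange (S a) ltac:(lia)).
  unfold edge_lo, edge_hi. lia.
Qed.

Lemma path_edge_inj a b : (a < m)%nat -> (b < m)%nat ->
  edge_lo a = edge_lo b -> edge_hi a = edge_hi b -> a = b.
Proof.
  intros Ha Hb Elo Ehi. destruct Hpath as [_ Hinj]. unfold edge_lo, edge_hi in *.
  assert (Hcase : (v a = v b /\ v (S a) = v (S b)) \/ (v a = v (S b) /\ v (S a) = v b)) by lia.
  destruct Hcase as [[E1 _]|[E1 E2]]; [apply Hinj; auto; lia|].
  apply Hinj in E1; apply Hinj in E2; lia.
Qed.

Lemma path_weight_measurable i : (i < m)%nat -> measurable F (path_weight i).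
Proof.
  intros Hi t. rewrite path_weight_edge by auto. apply (proj1 Hiid), path_edge_valid; auto.
Qed.

Lemma path_weight_cdf t : (forall a, (a < m)%nat -> 0 <= t a) ->
  P (fun w => forall a, (a < m)%nat -> path_weight a w <= t a) = prodR m (fun a => 1 - exp (- t a / INR n)).
Proof.
  intro Ht. rewrite <- (proj2 Hiid m edge_lo edge_hi t).
  - apply P_equiv. intro w; split; intros X a Ha; specialize (X a Ha);
      rewrite path_weight_edge in * by auto; auto.
  - intros a Ha; split; [apply path_edge_valid|]; auto.
  - intros a b Ha Hb; apply path_edge_inj; auto.
Qed.

Lemma path_weight_nonpos i : (i < m)%nat -> P (fun w => path_weight i w <= 0) = 0.
Proof.
  intro Hi. rewrite path_weight_edge by auto.
  rewrite (P_equiv P _ (fun w => forall a, (a < 1)%nat ->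
             W ((fun _ => edge_lo i) a) ((fun _ => edge_hi i) a) w <= (fun _ => 0) a))
    by (intro w; split; [intros X a Ha; auto|intro X; apply (X O); lia]).
  rewrite (proj2 Hiid); [|intros a Ha; split; [apply path_edge_valid; auto|lra]|intros; lia].
  simpl. replace (- 0 / INR n) with 0 by (unfold Rdiv; ring). rewrite exp_0. ring.
Qed.
End PathWeights.

(** * The tail estimate *)

Lemma exp_neg1_bounds : 1 / 3 <= exp (-1) <= 1 / 2.
Proof.
  pose proof exp_le_3. pose proof (exp_ineq1_le 1). pose proof (exp_pos 1).
  replace (-1) with (- (1)) by ring. rewrite exp_Ropp. split.
  - apply (Rmult_le_reg_l (exp 1)); [lra|]. rewrite Rinv_r by lra. lra.
  - apply (Rmult_le_reg_l (exp 1)); [lra|]. rewrite Rinv_r by lra. lra.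
Qed.

(* After cancelling common factors, this compares the Chernoff bound of the tilted sum with [den_lower]. *)
Lemma tilted_ratio_le (m h : nat) (r : R) : (1 <= m)%nat -> (h <= m)%nat -> INR h <= INR m / 2 ->
  0 <= r <= 3 / 2 ->
  exp (INR m) * ((1 + r) * exp (- r)) ^ (m - h) * INR (fact m)
    <= (INR m * (1 - 1 / (2 * INR m)) ^ 2) ^ m * (4 * exp 1 * INR m * exp (- (r * r) * INR m / 16)).
Proof.
  intros Hm Hh Hh2 Hr. set (M := INR m) in *. set (E16 := exp (- (r * r) * M / 16)).
  assert (HM : 1 <= M) by (apply (le_INR 1); auto).
  assert (HQ : ((1 + r) * exp (- r)) ^ (m - h) <= E16).
  { apply Rle_trans with (exp (- (r * r) / 8) ^ (m - h)).
    - apply pow_incr. split; [pose proof (exp_pos (- r)); nra|apply one_plus_exp_neg_le; lra].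
    - rewrite <- exp_mul_INR. apply exp_le_compat. rewrite minus_INR by auto. fold M.
      assert (0 <= r * r * (M / 2 - INR h)) by (apply Rmult_le_pos; nra). lra. }
  assert (Hq : 1 / 2 <= (1 - 1 / (2 * M)) ^ m).
  { pose proof (pow_ge_bernoulli m (1 / (2 * M))) as Hb. fold M in Hb.
    replace (M * (1 / (2 * M))) with (1 / 2) in Hb by (field; lra).
    assert (1 / (2 * M) <= 1) by (apply (Rmult_le_reg_r (2 * M)); [|field_simplify]; lra).
    assert (0 < 1 / (2 * M)) by (apply Rdiv_lt_0_compat; lra).
    specialize (Hb ltac:(lra)). lra. }
  pose proof (fact_le m Hm) as Hfact. fold M in Hfact.
  assert (HeM : exp M * exp (- M) = 1) by (rewrite <- exp_plus, Rplus_opp_r; apply exp_0).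
  pose proof (exp_pos M). pose proof (exp_pos 1). pose proof (exp_pos (- M)).
  assert (HE16 : 0 < E16) by apply exp_pos.
  assert (HMm : 0 < M ^ m) by (apply pow_lt; lra).
  assert (HQ0 : 0 <= ((1 + r) * exp (- r)) ^ (m - h)) by (apply pow_le; pose proof (exp_pos (- r)); nra).
  replace ((M * (1 - 1 / (2 * M)) ^ 2) ^ m) with (M ^ m * ((1 - 1 / (2 * M)) ^ m) ^ 2)
    by (rewrite Rpow_mult_distr, <- !pow_mult, Nat.mul_comm; reflexivity).
  apply Rle_trans with (exp M * E16 * (exp 1 * M ^ S m * exp (- M))).
  - rewrite Rmult_assoc, (Rmult_assoc (exp M)). apply Rmult_le_compat_l; [lra|].
    apply Rmult_le_compat; auto. apply pos_INR.
  - replace (exp M * E16 * (exp 1 * M ^ S m * exp (- M))) with (exp 1 * M * M ^ m * E16 * (exp M * exp (- M)))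
      by (simpl; ring).
    rewrite HeM. assert (0 < exp 1 * M * M ^ m * E16) by (repeat apply Rmult_lt_0_compat; lra).
    replace (M ^ m * ((1 - 1 / (2 * M)) ^ m) ^ 2 * (4 * exp 1 * M * E16))
      with (exp 1 * M * M ^ m * E16 * (4 * ((1 - 1 / (2 * M)) ^ m) ^ 2)) by ring.
    apply Rmult_le_compat_l; [lra|]. nra.
Qed.

(* [exp (7 eta' M / 144) >= (7 eta' M / 432) ^ 3] absorbs the prefactor [(M + 1) * 4 e M] beyond this size. *)
Definition tail_threshold (eta' : R) : R := 12 * (432 / (7 * eta')) ^ 3.

Lemma tail_sum_le (M eta' r : R) : 0 < eta' -> 16 * eta' / 9 <= r * r -> 1 <= M -> tail_threshold eta' <= M ->
  (M + 1) * (4 * exp 1 * M * exp (- (r * r) * M / 16)) <= 2 * exp (- M * eta' / 16).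
Proof.
  intros Heta Hr HM1 HM. unfold tail_threshold in HM.
  set (a := (7 * eta' / 432) ^ 3).
  assert (Ha0 : 0 < a) by (apply pow_lt; lra).
  assert (Ha : a * (12 * (432 / (7 * eta')) ^ 3) = 12).
  { unfold a. rewrite Rmult_comm, Rmult_assoc, <- Rpow_mult_distr.
    replace (432 / (7 * eta') * (7 * eta' / 432)) with 1 by (field; lra). rewrite pow1. ring. }
  assert (HM0 : 0 < 12 * (432 / (7 * eta')) ^ 3) by (apply Rmult_lt_0_compat; [lra|apply pow_lt, Rdiv_lt_0_compat; lra]).
  assert (HaM : 12 <= a * M) by (rewrite <- Ha; apply Rmult_le_compat_l; lra).
  set (X := 7 * eta' * M / 144).
  assert (HX : a * M ^ 3 <= exp X).
  { eapply Rle_trans; [|apply exp_ge_cube; unfold X; nra].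
    right. unfold a, X. rewrite <- Rpow_mult_distr. f_equal. field. }
  assert (HE : exp (- (r * r) * M / 16) <= exp (- M * eta' / 16) * / exp X).
  { rewrite <- exp_Ropp, <- exp_plus. apply exp_le_compat. unfold X. nra. }
  pose proof (exp_pos X). pose proof (exp_pos (- M * eta' / 16)). pose proof exp_le_3. pose proof (exp_pos 1).
  assert (HM3 : (M + 1) * (4 * exp 1 * M) <= 2 * exp X).
  { assert (4 * exp 1 * M <= 12 * M) by nra.
    apply Rle_trans with (24 * (M * M)); [nra|]. apply Rle_trans with (2 * (a * M ^ 3)); [|lra].
    simpl. nra. }
  apply Rle_trans with ((M + 1) * (4 * exp 1 * M) * (exp (- M * eta' / 16) * / exp X)).
  { rewrite <- Rmult_assoc. apply Rmult_le_compat_l; [nra|auto]. }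
  apply Rle_trans with (2 * exp X * (exp (- M * eta' / 16) * / exp X)).
  { apply Rmult_le_compat_r; auto. apply Rmult_le_pos; [lra|left; apply Rinv_0_lt_compat; auto]. }
  right. field. lra.
Qed.

(* [erlang_lower nn (lam / (2 m)) m (lam m)] in closed form. *)
Definition den_lower (nn lam : R) (m : nat) : R :=
  exp (- (lam * INR m) / nn) * (lam * INR m * (1 - 1 / (2 * INR m)) / nn) ^ m / INR (fact m).

Section TailEstimate.
Context {Omega : Type} {F : (Omega -> Prop) -> Prop} {P : (Omega -> Prop) -> R}.
Hypothesis HP : is_prob_space F P.
Variables (n m l : nat) (W : nat -> nat -> Omega -> R) (v : nat -> nat) (lam eta' : R).
Hypothesis Hiid : iid_exp_weights n F P W.
Hypothesis Hpath : is_path n m v.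
Hypothesis Hn : 2 <= INR n.
Hypothesis Hm : (1 <= m)%nat.
Hypothesis Hl : (1 <= l)%nat.
Hypothesis Hlam : 1 / 3 < lam < 3 / 4.
Hypothesis Heta' : 0 < eta' < 1 / 4.

Local Notation Y := (path_weight W v).
Local Notation r := (sqrt eta' / lam).

Lemma weights_measurable : forall i, (i < m)%nat -> measurable F (Y i).
Proof. exact (path_weight_measurable n m W v Hiid Hpath). Qed.

Lemma path_A_le_iff w : path_A W v m w <= lam <-> sumR m (fun i => Y i w) <= lam * INR m.
Proof.
  assert (HM : 0 < INR m) by (apply lt_0_INR; lia).
  unfold path_A, path_S, path_weight. split; intro X.
  - apply (Rmult_le_compat_r (INR m)) in X; [|lra]. unfold Rdiv in X.
    rewrite Rmult_assoc, Rinv_l in X by lra. lra.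
  - apply (Rmult_le_reg_r (INR m)); auto. unfold Rdiv. rewrite Rmult_assoc, Rinv_l by lra. lra.
Qed.

Lemma den_lower_pos : 0 < den_lower (INR n) lam m.
Proof.
  assert (HM : 1 <= INR m) by (apply (le_INR 1); auto).
  assert (Hq : 0 < 1 - 1 / (2 * INR m)) by (apply Rlt_0_minus, Rmult_lt_reg_r with (2 * INR m); [|field_simplify]; lra).
  unfold den_lower. apply Rdiv_lt_0_compat; [|apply lt_0_INR, lt_O_fact].
  apply Rmult_lt_0_compat; [apply exp_pos|apply pow_lt, Rdiv_lt_0_compat; [|lra]].
  repeat apply Rmult_lt_0_compat; lra.
Qed.

Lemma den_lower_le : den_lower (INR n) lam m <= P (fun w => path_A W v m w <= lam).
Proof.
  assert (HM : 1 <= INR m) by (apply (le_INR 1); auto).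
  set (eps := lam / (2 * INR m)).
  assert (Heps : 0 < eps) by (apply Rdiv_lt_0_compat; lra).
  pose proof (erlang_lower_le_prob HP m (INR n) Y ltac:(lra) weights_measurable
                (path_weight_cdf n m W v Hiid Hpath) eps Heps (lam * INR m)) as H.
  rewrite (P_equiv P _ _ path_A_le_iff). eapply Rle_trans; [|apply H].
  unfold erlang_lower. replace (INR m * eps) with (lam / 2) by (unfold eps; field; lra).
  destruct (Rle_dec (lam / 2) (lam * INR m)) as [_|C]; [|exfalso; apply C; nra].
  right. unfold den_lower.
  replace (lam * INR m - lam / 2) with (lam * INR m * (1 - 1 / (2 * INR m))) by (field; lra). reflexivity.
Qed.

Lemma tilt_rate_bounds : 0 < sqrt eta' < 1 / 2 /\ 0 < r <= 3 / 2 /\ 16 * eta' / 9 <= r * r.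
Proof.
  assert (Hs : sqrt eta' * sqrt eta' = eta') by (apply sqrt_sqrt; lra).
  assert (Hs0 : 0 < sqrt eta') by (apply sqrt_lt_R0; lra).
  assert (Hs1 : sqrt eta' < 1 / 2) by nra.
  split; [auto|split; [split|]].
  - apply Rdiv_lt_0_compat; lra.
  - apply (Rmult_le_reg_r lam); [lra|]. unfold Rdiv. rewrite Rmult_assoc, Rinv_l by lra. lra.
  - replace (sqrt eta' / lam * (sqrt eta' / lam)) with (sqrt eta' * sqrt eta' / (lam * lam)) by (field; lra).
    rewrite Hs. apply (Rmult_le_reg_r (lam * lam)); [nra|].
    replace (eta' / (lam * lam) * (lam * lam)) with eta' by (field; lra).
    assert (lam * lam < 9 / 16) by nra. nra.
Qed.

(* Exponential tilting behind the Chernoff bound: the rate [1/lam - 1/n] turns an exponential of mean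
   [n] into one of mean [lam], and the extra [- r / (1 + r) / lam] for [i >= h] into one of mean
   [lam (1 + r) = lam + sqrt eta']. *)
Definition tilt (h i : nat) : R :=
  if Nat.ltb i h then 1 / lam - 1 / INR n else 1 / lam - 1 / INR n - r / (1 + r) / lam.

Definition tilt_level (h : nat) : R := (1 / lam - 1 / INR n) * lam * INR m - r * (INR m - INR h).

Lemma admissible_shift k : (1 <= k)%nat -> INR k <= INR m / (2 * INR l) ->
  INR ((k - 1) * l) <= INR m / 2 /\ ((k - 1) * l <= m)%nat /\ (k < S m)%nat.
Proof.
  intros Hk1 Hk2. assert (HL : 1 <= INR l) by (apply (le_INR 1); auto).
  assert (Hk : 1 <= INR k) by (apply (le_INR 1); auto).
  assert (Hkl : INR k * INR l <= INR m / 2).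
  { apply (Rmult_le_compat_r (INR l)) in Hk2; [|lra].
    replace (INR m / (2 * INR l) * INR l) with (INR m / 2) in Hk2 by (field; lra). auto. }
  assert (Hh : INR ((k - 1) * l) <= INR m / 2) by (rewrite mult_INR, minus_INR by auto; simpl INR; nra).
  pose proof (pos_INR m). split; [auto|split].
  - apply INR_le. lra.
  - apply INR_lt. rewrite S_INR. nra.
Qed.

Lemma tail_event_tilted k w : (1 <= k)%nat -> INR k <= INR m / (2 * INR l) ->
  Lambda W v m l k w > lam + sqrt eta' -> path_A W v m w <= lam ->
  wsum Y (tilt ((k - 1) * l)) m w <= tilt_level ((k - 1) * l).
Proof.
  intros Hk1 Hk2 HL HA. destruct (admissible_shift k Hk1 Hk2) as [Hh1 [Hh2 _]].
  destruct tilt_rate_bounds as [Hs [Hr _]].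
  set (h := ((k - 1) * l)%nat) in *.
  apply path_A_le_iff in HA.
  unfold wsum, tilt, tilt_level. rewrite sumR_piecewise by auto.
  unfold Lambda, path_S in HL. fold h in HL. change (edge_weight W (v ?i) (v (S ?i))) with (Y i) in HL.
  set (Sm := sumR m (fun i => Y i w)) in *. set (Sh := sumR h (fun i => Y i w)) in *.
  assert (HM : 0 < INR m - INR h) by (pose proof (le_INR 1 m Hm); simpl in *; lra).
  assert (Hgap : (lam + sqrt eta') * (INR m - INR h) < Sm - Sh).
  { apply (Rmult_lt_compat_r (INR m - INR h)) in HL; auto.
    replace ((Sm - Sh) / (INR m - INR h) * (INR m - INR h)) with (Sm - Sh) in HL by (field; lra). lra. }
  set (alpha := 1 / lam - 1 / INR n). set (beta := r / (1 + r) / lam).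
  assert (Hbc : beta * (lam + sqrt eta') = r).
  { unfold beta. field. split; lra. }
  assert (Halpha : 0 < alpha).
  { unfold alpha. assert (1 / INR n <= 1 / 2) by (apply Rmult_le_reg_r with (2 * INR n); [lra|]; field_simplify; lra).
    assert (4 / 3 < 1 / lam) by (apply Rmult_lt_reg_r with lam; [lra|]; field_simplify; lra). lra. }
  assert (Hbeta : 0 < beta) by (unfold beta; apply Rdiv_lt_0_compat; [apply Rdiv_lt_0_compat|]; lra).
  replace (alpha * Sh + (alpha - beta) * (Sm - Sh)) with (alpha * Sm - beta * (Sm - Sh)) by ring.
  rewrite <- Hbc. nra.
Qed.

Lemma tilt_pos h i : 0 < tilt h i.
Proof.
  destruct tilt_rate_bounds as [Hs [Hr _]]. unfold tilt.
  assert (1 / INR n <= 1 / 2) by (apply Rmult_le_reg_r with (2 * INR n); [lra|]; field_simplify; lra).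
  assert (1 / 2 < 1 / lam - r / (1 + r) / lam).
  { replace (1 / lam - r / (1 + r) / lam) with (1 / (lam + sqrt eta')) by (field; lra).
    apply Rmult_lt_reg_r with (2 * (lam + sqrt eta')); [lra|]. field_simplify; lra. }
  assert (0 < r / (1 + r) / lam) by (repeat apply Rdiv_lt_0_compat; lra).
  destruct (Nat.ltb i h); lra.
Qed.

Lemma tilt_factor h i : let q := 1 - 1 / (2 * INR m) in
  / ((1 + tilt h i * INR n) * q) = if Nat.ltb i h then lam / (INR n * q) else lam / (INR n * q) * (1 + r).
Proof.
  intro q. destruct tilt_rate_bounds as [Hs [Hr _]].
  assert (HM : 1 <= INR m) by (apply (le_INR 1); auto).
  assert (Hq : 0 < q) by (unfold q; apply Rlt_0_minus; apply Rmult_lt_reg_r with (2 * INR m); [lra|]; field_simplify; lra).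
  unfold tilt. destruct (Nat.ltb i h).
  - replace (1 + (1 / lam - 1 / INR n) * INR n) with (INR n / lam) by (field; lra).
    field. repeat split; lra.
  - replace (1 + (1 / lam - 1 / INR n - r / (1 + r) / lam) * INR n) with (INR n / (lam + sqrt eta'))
      by (field; lra).
    field. repeat split; lra.
Qed.

Lemma tilted_prob_le h : (h <= m)%nat -> INR h <= INR m / 2 ->
  P (fun w => wsum Y (tilt h) m w <= tilt_level h)
    <= den_lower (INR n) lam m * (4 * exp 1 * INR m * exp (- (r * r) * INR m / 16)).
Proof.
  intros Hh Hh2. destruct tilt_rate_bounds as [Hs [Hr _]].
  assert (HM : 1 <= INR m) by (apply (le_INR 1); auto).
  set (q := 1 - 1 / (2 * INR m)).
  assert (Hq : 0 < q) by (unfold q; apply Rlt_0_minus; apply Rmult_lt_reg_r with (2 * INR m); [lra|]; field_simplify; lra).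
  set (A := lam / (INR n * q)).
  assert (HA : 0 < A) by (unfold A; apply Rdiv_lt_0_compat; nra).
  eapply Rle_trans.
  { apply (chernoff_bound HP m (INR n) Y ltac:(lra) weights_measurable (path_weight_cdf n m W v Hiid Hpath)
             (tilt h) (1 / (2 * INR m)) (tilt_pos h));
      [|apply (path_weight_nonpos n m W v Hiid Hpath)].
    split; [apply Rdiv_lt_0_compat|apply Rmult_lt_reg_r with (2 * INR m); [|field_simplify]]; lra. }
  unfold chernoff_factor. rewrite (prodR_ext m _ _ (fun i _ => tilt_factor h i)), prodR_piecewise by auto. fold q A.
  replace (exp (tilt_level h)) with (exp (- (lam * INR m) / INR n) * exp (INR m) * exp (- r) ^ (m - h)).
  2:{ rewrite <- exp_mul_INR, <- !exp_plus, minus_INR by auto. unfold tilt_level. f_equal. field. lra. }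
  replace (den_lower (INR n) lam m) with (exp (- (lam * INR m) / INR n) * A ^ m * (INR m * q ^ 2) ^ m / INR (fact m)).
  2:{ unfold den_lower, A. fold q. rewrite (Rmult_assoc (exp _)), <- Rpow_mult_distr.
      replace (lam / (INR n * q) * (INR m * q ^ 2)) with (lam * INR m * q / INR n) by (field; lra). reflexivity. }
  pose proof (tilted_ratio_le m h r Hm Hh Hh2 ltac:(lra)) as Hratio. fold q in Hratio.
  assert (Hf : 0 < INR (fact m)) by apply lt_0_INR, lt_O_fact.
  assert (HZ : 0 < exp (- (lam * INR m) / INR n) * A ^ m) by (apply Rmult_lt_0_compat; [apply exp_pos|apply pow_lt; auto]).
  apply Rle_trans with (exp (- (lam * INR m) / INR n) * A ^ m * (exp (INR m) * ((1 + r) * exp (- r)) ^ (m - h))).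
  { right. replace (A ^ m) with (A ^ h * A ^ (m - h)) by (rewrite <- pow_add; f_equal; lia).
    rewrite !Rpow_mult_distr. ring. }
  apply Rle_trans with (exp (- (lam * INR m) / INR n) * A ^ m *
                        ((INR m * q ^ 2) ^ m * (4 * exp 1 * INR m * exp (- (r * r) * INR m / 16)) / INR (fact m))).
  2:{ right. field. lra. }
  apply Rmult_le_compat_l; [lra|]. apply (Rmult_le_reg_r (INR (fact m))); auto.
  replace ((INR m * q ^ 2) ^ m * (4 * exp 1 * INR m * exp (- (r * r) * INR m / 16)) / INR (fact m) * INR (fact m))
    with ((INR m * q ^ 2) ^ m * (4 * exp 1 * INR m * exp (- (r * r) * INR m / 16))) by (field; lra).
  auto.
Qed.

Lemma measurable_partial_sum j : (j <= m)%nat -> measurable F (fun w => sumR j (fun i => Y i w)).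
Proof. intro Hj. apply (measurable_sumR HP Y). intros i Hi. apply weights_measurable. lia. Qed.

Lemma F_tail_event : F (fun w => event_E W v m l lam eta' w /\ path_A W v m w <= lam).
Proof.
  apply (F_and HP).
  - apply (ps_union F P HP). intro k.
    apply (F_equiv _ (fun w => ((1 <= k)%nat /\ INR k <= INR m / (2 * INR l)) /\
                              lam + sqrt eta' < Lambda W v m l k w)); [intro; tauto|].
    apply (F_and_prop HP). intros [Hk1 Hk2]. destruct (admissible_shift k Hk1 Hk2) as [_ [Hh _]].
    apply (measurable_gt HP). intro t. unfold Lambda, path_S.
    apply (F_equiv _ (fun w => / (INR m - INR ((k - 1) * l)) *
             (sumR m (fun i => Y i w) + -1 * sumR ((k - 1) * l) (fun i => Y i w)) <= t)).
    { intro w. unfold Rdiv. rewrite Rmult_comm. unfold path_weight. split; intro X; lra. }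
    apply (measurable_scal HP), (measurable_plus HP); [|apply (measurable_scal HP)];
      apply measurable_partial_sum; auto.
  - apply (F_equiv _ (fun w => sumR m (fun i => Y i w) <= lam * INR m)); [apply path_A_le_iff|].
    apply measurable_partial_sum; auto.
Qed.

Lemma numerator_le :
  P (fun w => event_E W v m l lam eta' w /\ path_A W v m w <= lam)
    <= (INR m + 1) * (den_lower (INR n) lam m * (4 * exp 1 * INR m * exp (- (r * r) * INR m / 16))).
Proof.
  set (B := den_lower (INR n) lam m * (4 * exp 1 * INR m * exp (- (r * r) * INR m / 16))).
  set (admissible := fun k => (1 <= k)%nat /\ INR k <= INR m / (2 * INR l)).
  set (piece := fun k w => admissible k /\ wsum Y (tilt ((k - 1) * l)) m w <= tilt_level ((k - 1) * l)).
  assert (Hpiece : forall k, F (piece k)).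
  { intro k. apply (F_and_prop HP). intros [Hk1 Hk2]. destruct (admissible_shift k Hk1 Hk2) as [_ [Hh _]].
    apply (F_wsum_le HP m Y weights_measurable); auto. }
  apply Rle_trans with (P (fun w => exists k, (k < S m)%nat /\ piece k w)).
  { apply (P_mono HP); [apply F_tail_event|apply (F_exists_lt HP); auto|].
    intros w [[k [Hk1 [Hk2 HL]]] HA]. exists k. destruct (admissible_shift k Hk1 Hk2) as [_ [_ Hk]].
    split; [auto|split; [split; auto|apply tail_event_tilted; auto]]. }
  eapply Rle_trans; [apply (P_finite_union_le HP); auto|].
  rewrite <- S_INR, <- sumR_const. apply sumR_le. intros k _.
  destruct (classic (admissible k)) as [[Hk1 Hk2]|Hk].
  - destruct (admissible_shift k Hk1 Hk2) as [Hh1 [Hh2 _]].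
    eapply Rle_trans; [|apply (tilted_prob_le ((k - 1) * l)); auto].
    apply (P_mono HP); [auto|apply (F_wsum_le HP m Y weights_measurable); auto|intros w [_ X]; auto].
  - rewrite (P_equiv P _ (fun _ => False)), (P_empty HP) by (intro w; unfold piece; tauto).
    pose proof den_lower_pos. pose proof (exp_pos 1). pose proof (exp_pos (- (r * r) * INR m / 16)).
    pose proof (pos_INR m). unfold B. apply Rmult_le_pos; [lra|]. apply Rmult_le_pos; [|lra]. nra.
Qed.

Lemma conditional_tail_le : tail_threshold eta' <= INR m ->
  P (fun w => event_E W v m l lam eta' w /\ path_A W v m w <= lam) / P (fun w => path_A W v m w <= lam)
    <= 2 * exp (- INR m * eta' / 16).
Proof.
  intro Hthr. destruct tilt_rate_bounds as [_ [_ Hr2]].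
  set (num := P (fun w => event_E W v m l lam eta' w /\ path_A W v m w <= lam)).
  set (d := den_lower (INR n) lam m).
  set (B := 4 * exp 1 * INR m * exp (- (r * r) * INR m / 16)).
  pose proof den_lower_pos as Hd. pose proof den_lower_le as Hden. pose proof numerator_le as Hnum.
  pose proof (ps_nonneg F P HP _ F_tail_event) as Hnum0. fold num d B in Hd, Hden, Hnum, Hnum0.
  apply Rle_trans with (num / d).
  { unfold Rdiv. apply Rmult_le_compat_l; auto. apply Rinv_le_contravar; auto. }
  apply Rle_trans with ((INR m + 1) * B).
  { apply (Rmult_le_reg_r d); auto. unfold Rdiv. rewrite Rmult_assoc, Rinv_l by lra. lra. }
  apply tail_sum_le; auto; [lra|apply (le_INR 1); auto].
Qed.
End TailEstimate.

Theorem lemma2p4 :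
  forall (eta' delta0 : R),
    0 < eta' < 1 / 4 -> 0 < delta0 < 1 ->
    exists ns : nat, (0 < ns)%nat /\
      forall (eta : R) (l : nat), 0 < eta < eta' ->
        (* l = floor (1 / eta') *)
        INR l <= 1 / eta' < INR l + 1 ->
        forall (n m : nat) (delta : R),
          (ns <= n)%nat -> delta0 <= delta ->
          (* delta n = m is a positive integer *)
          (1 <= m)%nat -> delta * INR n = INR m ->
          forall (Omega : Type) (F : (Omega -> Prop) -> Prop)
                 (P : (Omega -> Prop) -> R) (W : nat -> nat -> Omega -> R),
            is_prob_space F P -> iid_exp_weights n F P W ->
            forall v : nat -> nat, is_path n m v ->
              let lam := exp (-1) + eta in
              P (fun w => event_E W v m l lam eta' w /\ path_A W v m w <= lam)
                / P (fun w => path_A W v m w <= lam)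
              <= 2 * INR n * exp (- (delta * INR n) * eta' / 16).
Proof.
  intros eta' delta0 Heta' Hd0.
  destruct (INR_unbounded (tail_threshold eta' / delta0)) as [N HN].
  exists (S (S N)). split; [lia|].
  intros eta l Heta Hl n m delta Hn Hdelta Hm Hdm Omega F P W HP Hiid v Hpath lam.
  assert (Hn2 : 2 <= INR n) by (apply (le_INR 2); lia).
  assert (Hl1 : (1 <= l)%nat).
  { apply INR_le. assert (4 < 1 / eta') by (apply Rmult_lt_reg_r with eta'; [|field_simplify]; lra).
    simpl. lra. }
  assert (Hlam : 1 / 3 < lam < 3 / 4) by (unfold lam; pose proof exp_neg1_bounds; lra).
  assert (Hthr : tail_threshold eta' <= INR m).
  { rewrite <- Hdm. apply Rle_trans with (delta0 * INR n).
    - apply Rle_trans with (delta0 * (tail_threshold eta' / delta0)); [right; field; lra|].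
      apply Rmult_le_compat_l; [lra|]. apply Rle_trans with (INR (S (S N))); [rewrite !S_INR; lra|].
      apply le_INR; auto.
    - apply Rmult_le_compat_r; [apply pos_INR|auto]. }
  rewrite Hdm. eapply Rle_trans; [apply (conditional_tail_le HP n m l W v lam eta'); auto|].
  pose proof (exp_pos (- INR m * eta' / 16)). nra.
Qed.
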